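(* Let $(\kappa_1,\ldots,\kappa_n)\in\mathcal{K}(K,\mathcal{P},\mathcal{Q})$ and $\delta\in(0,1)$. Let $\phi_1,\ldots,\phi_m>0$, $\psi_1,\ldots,\psi_n>0$, and let $\lambda_{\ell,j}\in\mathbb{R}$ be given for $j=1,\ldots,m$ and $\ell\in\mathcal{C}(j)$. Set $\lambda_{\ell,j}:=0$ for $\ell\notin\mathcal{C}(j)$. Define $$\Phi:=\sum_{j=1}^m\phi_jP_j,\qquad \Psi:=\sum_{\ell=1}^n\psi_\ell Q_\ell,\qquad \Lambda:=\sum_{j=1}^m\sum_{\ell\in\mathcal{C}(j)}\lambda_{\ell,j}\,Q_\ell KP_j\in\mathcal{L}(X;Y).$$ Suppose that $$(1-\delta)\psi_\ell\ \ge\ \kappa_\ell\bigl(\lambda_{\ell,1}^2/\phi_1,\ldots,\lambda_{\ell,m}^2/\phi_m\bigr)\qquad(\ell=1,\ldots,n).$$ Then the operator $$\mathcal{M}:=\begin{pmatrix}\Phi & -\Lambda^*\\ -\Lambda & \Psi\end{pmatrix}\in\mathcal{L}(X\times Y;X\times Y)$$ is self-adjoint and positive semidefinite. Moreover, $$\mathcal{M}\ \ge\ \begin{pmatrix}\delta\Phi & 0\\ 0 & 0\end{pmatrix}.$$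
   Context: $X,Y$ are real Hilbert spaces and $K\in\mathcal{L}(X;Y)$ is a bounded linear operator. The operators $P_1,\ldots,P_m\in\mathcal{L}(X;X)$ are orthogonal projections with $\sum_{j=1}^mP_j=I$ and $P_iP_j=0$ for $i\ne j$. Likewise $Q_1,\ldots,Q_n\in\mathcal{L}(Y;Y)$ are orthogonal projections with $\sum_{\ell}Q_\ell=I$ and $Q_kQ_\ell=0$ for $k\ne\ell$. We write $\mathcal{P}=\{P_1,\ldots,P_m\}$ and $\mathcal{Q}=\{Q_1,\ldots,Q_n\}$, and $\mathcal{C}(j):=\{\ell\in\{1,\ldots,n\}: Q_\ell KP_j\neq0\}$. For self-adjoint operators, $T\ge S$ means that $T-S$ is positive semidefinite. Definition: $(\kappa_1,\ldots,\kappa_n)\in\mathcal{K}(K,\mathcal{P},\mathcal{Q})$ means that each $\kappa_\ell:[0,\infty)^m\to[0,\infty)$ is monotone (non-decreasing in each argument) and the following three conditions hold. (i) Estimation: for all real numbers $w_{\ell,j}$ ($\ell=1,\ldots,n$, $j=1,\ldots,m$), $$\sum_{j=1}^m\sum_{\ell,k=1}^n w_{\ell,j}w_{k,j}\,Q_\ell KP_jK^*Q_k\ \le\ \sum_{\ell=1}^n\kappa_\ell(w_{\ell,1}^2,\ldots,w_{\ell,m}^2)\,Q_\ell.$$ (ii) Boundedness: there is $\overline\kappa>0$ with $\kappa_\ell(z_1,\ldots,z_m)\le\overline\kappa\sum_j z_j$. (iii) Non-degeneracy: there are $\underline\kappa>0$ and indices $\ell^*(j)\in\{1,\ldots,n\}$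 with $\underline\kappa z_j\le\kappa_{\ell^*(j)}(z_1,\ldots,z_m)$ for $j=1,\ldots,m$. *)

From Stdlib Require Import Reals.
Open Scope R_scope.

Record RHilbert := {
  hcar :> Type;
  hzero : hcar;
  hadd : hcar -> hcar -> hcar;
  hopp : hcar -> hcar;
  hscal : R -> hcar -> hcar;
  hinner : hcar -> hcar -> R;
  hadd_assoc : forall x y z, hadd x (hadd y z) = hadd (hadd x y) z;
  hadd_comm : forall x y, hadd x y = hadd y x;
  hadd_0 : forall x, hadd x hzero = x;
  hadd_opp : forall x, hadd x (hopp x) = hzero;
  hscal_assoc : forall a b x, hscal a (hscal b x) = hscal (a * b) x;
  hscal_1 : forall x, hscal 1 x = x;
  hscal_distr_v : forall a x y, hscal a (hadd x y) = hadd (hscal a x) (hscal a y);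
  hscal_distr_s : forall a b x, hscal (a + b) x = hadd (hscal a x) (hscal b x);
  hinner_sym : forall x y, hinner x y = hinner y x;
  hinner_add : forall x y z, hinner (hadd x y) z = hinner x z + hinner y z;
  hinner_scal : forall a x y, hinner (hscal a x) y = a * hinner x y;
  hinner_pos : forall x, 0 <= hinner x x;
  hinner_def : forall x, hinner x x = 0 -> x = hzero;
  hcomplete : forall u : nat -> hcar,
    (forall eps, 0 < eps -> exists N, forall p q, (N <= p)%nat -> (N <= q)%nat ->
        sqrt (hinner (hadd (u p) (hopp (u q))) (hadd (u p) (hopp (u q)))) < eps) ->
    exists l, forall eps, 0 < eps -> exists N, forall p, (N <= p)%nat ->
        sqrt (hinner (hadd (u p) (hopp l)) (hadd (u p) (hopp l))) < eps
}.

Arguments hzero {r}.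
Arguments hadd {r}.
Arguments hopp {r}.
Arguments hscal {r}.
Arguments hinner {r}.

Definition hsub {X : RHilbert} (x y : X) : X := hadd x (hopp y).
Definition hnorm {X : RHilbert} (x : X) : R := sqrt (hinner x x).

Fixpoint vsum {X : RHilbert} (f : nat -> X) (k : nat) : X :=
  match k with O => hzero | S k' => hadd (vsum f k') (f k') end.
Fixpoint rsum (f : nat -> R) (k : nat) : R :=
  match k with O => 0 | S k' => rsum f k' + f k' end.

Definition bounded_linear {X Y : RHilbert} (T : X -> Y) : Prop :=
  (forall a x y, T (hadd (hscal a x) y) = hadd (hscal a (T x)) (T y)) /\
  exists C, forall x, hnorm (T x) <= C * hnorm x.

Definition is_adjoint {X Y : RHilbert} (T : X -> Y) (Ts : Y -> X) : Prop :=
  forall x y, hinner (T x) y = hinner x (Ts y).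

Definition orth_proj {X : RHilbert} (P : X -> X) : Prop :=
  bounded_linear P /\ (forall x, P (P x) = P x) /\
  (forall x y, hinner (P x) y = hinner x (P y)).

Definition proj_family {X : RHilbert} (m : nat) (P : nat -> X -> X) : Prop :=
  (forall j, (j < m)%nat -> orth_proj (P j)) /\
  (forall x, vsum (fun j => P j x) m = x) /\
  (forall i j, (i < m)%nat -> (j < m)%nat -> i <> j -> forall x, P i (P j x) = hzero).

Definition Cset {X Y : RHilbert} (K : X -> Y) (P : nat -> X -> X) (Q : nat -> Y -> Y)
  (j l : nat) : Prop := exists x, Q l (K (P j x)) <> hzero.

Definition nonneg_vec (m : nat) (z : nat -> R) : Prop := forall j, (j < m)%nat -> 0 <= z j.

(** kappa : [0,oo)^m -> [0,oo) monotone, encoded as (nat -> R) -> R depending only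
    on the first m coordinates. *)
Definition kappa_fun (m : nat) (k : (nat -> R) -> R) : Prop :=
  (forall z z', nonneg_vec m z -> (forall j, (j < m)%nat -> z j = z' j) -> k z = k z') /\
  (forall z, nonneg_vec m z -> 0 <= k z) /\
  (forall z z', nonneg_vec m z -> (forall j, (j < m)%nat -> z j <= z' j) -> k z <= k z').

(** (kappa_1..kappa_n) \in K(K, P, Q); indices are 0-based. *)
Definition in_Kset {X Y : RHilbert} (K : X -> Y) (Kstar : Y -> X) (m n : nat)
  (P : nat -> X -> X) (Q : nat -> Y -> Y) (kap : nat -> (nat -> R) -> R) : Prop :=
  (forall l, (l < n)%nat -> kappa_fun m (kap l)) /\
  (forall (w : nat -> nat -> R) (y : Y),
     hinner (vsum (fun j => vsum (fun l => vsum (fun k =>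
               hscal (w l j * w k j) (Q l (K (P j (Kstar (Q k y)))))) n) n) m) y
     <= hinner (vsum (fun l => hscal (kap l (fun j => (w l j)^2)) (Q l y)) n) y) /\
  (exists kb, 0 < kb /\ forall l z, (l < n)%nat -> nonneg_vec m z ->
       kap l z <= kb * rsum z m) /\
  (exists kl (lstar : nat -> nat), 0 < kl /\ forall j, (j < m)%nat ->
       (lstar j < n)%nat /\ forall z, nonneg_vec m z -> kl * z j <= kap (lstar j) z).

Definition pinner {X Y : RHilbert} (u v : X * Y) : R :=
  hinner (fst u) (fst v) + hinner (snd u) (snd v).

(* Write u = (x, y).  Then <(M - diag(delta Phi, 0)) u, u> =
   (1 - delta) <Phi x, x> - 2 <Lambda x, y> + <Psi y, y>, so everything reduces to
   2 <Lambda x, y> <= (1 - delta) <Phi x, x> + <Psi y, y>.  Moving the projections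
   through K gives <Lambda x, y> = sum_j <P_j x, b_j> with b_j = P_j Lambda^* y.
   Young's inequality with weight (1 - delta) phi_j bounds each term, and the
   remaining sum_j |b_j|^2 / phi_j is exactly the quadratic form of the estimation
   condition (i) with weights lambda_{l,j} / sqrt phi_j, hence at most
   sum_l kappa_l(lambda_l^2 / phi) <Q_l y, y> <= (1 - delta) <Psi y, y>. *)

From Stdlib Require Import Reals Lra.
From Corelib Require Import ssreflect.
Open Scope R_scope.

Lemma rsum_ext (f g : nat -> R) k :
  (forall i, (i < k)%nat -> f i = g i) -> rsum f k = rsum g k.
Proof. elim: k => [|k IHk] //= fg; rewrite IHk ?fg //; auto. Qed.

Lemma rsum_le (f g : nat -> R) k :
  (forall i, (i < k)%nat -> f i <= g i) -> rsum f k <= rsum g k.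
Proof.
elim: k => [|k IHk] /= fg; first lra.
have := IHk (fun i hi => fg i (Nat.lt_lt_succ_r _ _ hi)).
have := fg k (Nat.lt_succ_diag_r k); lra.
Qed.

Lemma rsum_ge0 (f : nat -> R) k : (forall i, (i < k)%nat -> 0 <= f i) -> 0 <= rsum f k.
Proof.
move=> f_ge0; apply: Rle_trans (rsum_le (fun _ => 0) f k f_ge0).
by elim: k {f_ge0} => [|k IHk] /=; lra.
Qed.

Lemma rsumD (f g : nat -> R) k : rsum (fun i => f i + g i) k = rsum f k + rsum g k.
Proof. elim: k => [|k IHk] /=; rewrite ?IHk; ring. Qed.

Lemma rsumZ c (f : nat -> R) k : rsum (fun i => c * f i) k = c * rsum f k.
Proof. elim: k => [|k IHk] /=; rewrite ?IHk; ring. Qed.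

Lemma div_sqrt_mul a b p : 0 < p -> a / sqrt p * (b / sqrt p) = a * b / p.
Proof.
move=> p_gt0; have sp_gt0 := sqrt_lt_R0 p p_gt0.
have {3}-> : p = sqrt p * sqrt p by rewrite sqrt_sqrt; lra.
field; lra.
Qed.

Section InnerProduct.

Variable H : RHilbert.
Implicit Types x y z : H.

Lemma hinner0l y : hinner hzero y = 0.
Proof. have := hinner_add H hzero hzero y; rewrite hadd_0; lra. Qed.

Lemma hinner_oppl x y : hinner (hopp x) y = - hinner x y.
Proof. have := hinner_add H x (hopp x) y; rewrite hadd_opp hinner0l; lra. Qed.

Lemma hinner_subl x y z : hinner (hsub x y) z = hinner x z - hinner y z.
Proof. rewrite /hsub hinner_add hinner_oppl; ring. Qed.

Lemma hinner_subr x y z : hinner z (hsub x y) = hinner z x - hinner z y.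
Proof. by rewrite !(hinner_sym H z) hinner_subl. Qed.

Lemma hinner_scalr a x y : hinner y (hscal a x) = a * hinner y x.
Proof. by rewrite !(hinner_sym H y) hinner_scal. Qed.

Lemma hinner_vsuml (f : nat -> H) k y :
  hinner (vsum f k) y = rsum (fun i => hinner (f i) y) k.
Proof. by elim: k => [|k IHk] /=; rewrite ?hinner0l // hinner_add IHk. Qed.

Lemma hinner_vsumr (f : nat -> H) k y :
  hinner y (vsum f k) = rsum (fun i => hinner y (f i)) k.
Proof.
rewrite hinner_sym hinner_vsuml; apply: rsum_ext => i _; exact: hinner_sym.
Qed.

(* Expand <t x - y, t x - y> >= 0. *)
Lemma hinner_young x y t :
  0 < t -> 2 * hinner x y <= t * hinner x x + hinner y y / t.
Proof.
move=> t_gt0; have := hinner_pos H (hsub (hscal t x) y).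
rewrite hinner_subl !hinner_subr !hinner_scal !hinner_scalr (hinner_sym H y x) => ge0.
apply: (Rmult_le_reg_l t) => //.
have -> : t * (t * hinner x x + hinner y y / t) = t * t * hinner x x + hinner y y
  by field; lra.
nra.
Qed.

Lemma orth_proj_hinner_self (P : H -> H) x :
  orth_proj P -> hinner (P x) (P x) = hinner (P x) x.
Proof. by case=> _ [Pid Psym]; rewrite -Psym Pid. Qed.

Lemma orth_proj_hinner_ge0 (P : H -> H) x : orth_proj P -> 0 <= hinner (P x) x.
Proof. by move=> hP; rewrite -orth_proj_hinner_self //; apply: hinner_pos. Qed.

End InnerProduct.

Lemma hinner_proj_adjoint {X Y : RHilbert} (K : X -> Y) (Kstar : Y -> X)
    (P : X -> X) (Q : Y -> Y) z y :
  is_adjoint K Kstar -> orth_proj P -> orth_proj Q ->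
  hinner (Q (K (P z))) y = hinner (P z) (P (Kstar (Q y))).
Proof. by move=> hKs [_ [Pid Psym]] [_ [_ Qsym]]; rewrite Qsym hKs -Psym Pid. Qed.

Section DiagonalOperator.

Variables (X : RHilbert) (m : nat) (P : nat -> X -> X) (phi : nat -> R).
Hypothesis P_proj : forall j, (j < m)%nat -> orth_proj (P j).

Definition diag_op (x : X) : X := vsum (fun j => hscal (phi j) (P j x)) m.

Lemma diag_op_self_adjoint : is_adjoint diag_op diag_op.
Proof.
move=> x1 x2; rewrite /diag_op hinner_vsuml hinner_vsumr.
apply: rsum_ext => j hj; rewrite hinner_scal hinner_scalr.
by case: (P_proj j hj) => _ [_ ->].
Qed.

Lemma hinner_diag_op x :
  hinner (diag_op x) x = rsum (fun j => phi j * hinner (P j x) (P j x)) m.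
Proof.
rewrite /diag_op hinner_vsuml; apply: rsum_ext => j hj.
by rewrite hinner_scal orth_proj_hinner_self; auto.
Qed.

Lemma hinner_diag_op_ge0 x :
  (forall j, (j < m)%nat -> 0 <= phi j) -> 0 <= hinner (diag_op x) x.
Proof.
move=> phi_ge0; rewrite hinner_diag_op; apply: rsum_ge0 => j hj.
by apply: Rmult_le_pos; [auto | apply: hinner_pos].
Qed.

End DiagonalOperator.

Section Coupling.

Variables (X Y : RHilbert) (K : X -> Y) (Kstar : Y -> X) (m n : nat).
Variables (P : nat -> X -> X) (Q : nat -> Y -> Y) (lam : nat -> nat -> R).
Hypothesis K_adj : is_adjoint K Kstar.
Hypothesis P_proj : forall j, (j < m)%nat -> orth_proj (P j).
Hypothesis Q_proj : forall l, (l < n)%nat -> orth_proj (Q l).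

Definition coupling_op (x : X) : Y :=
  vsum (fun j => vsum (fun l => hscal (lam l j) (Q l (K (P j x)))) n) m.

(* The j-th block P_j Lambda^* y of the adjoint of the coupling operator. *)
Definition coupling_adj_block (j : nat) (y : Y) : X :=
  vsum (fun l => hscal (lam l j) (P j (Kstar (Q l y)))) n.

Lemma hinner_coupling_op x y :
  hinner (coupling_op x) y = rsum (fun j => hinner (P j x) (coupling_adj_block j y)) m.
Proof.
rewrite /coupling_op hinner_vsuml; apply: rsum_ext => j hj.
rewrite hinner_vsuml hinner_vsumr; apply: rsum_ext => l hl.
by rewrite hinner_scal hinner_scalr (hinner_proj_adjoint _ _ _ _ _ _ K_adj (P_proj j hj) (Q_proj l hl)).
Qed.

Lemma hinner_coupling_adj_block j y :
  hinner (coupling_adj_block j y) (coupling_adj_block j y) =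
  rsum (fun l => rsum (fun k => lam l j * lam k j *
    hinner (P j (Kstar (Q l y))) (P j (Kstar (Q k y)))) n) n.
Proof.
rewrite {1}/coupling_adj_block hinner_vsuml; apply: rsum_ext => l _.
rewrite hinner_scal /coupling_adj_block hinner_vsumr -rsumZ.
by apply: rsum_ext => k _; rewrite hinner_scalr; ring.
Qed.

Section Estimate.

Variables (kap : nat -> (nat -> R) -> R) (phi psi : nat -> R) (c : R).
Hypothesis kap_fun : forall l, (l < n)%nat -> kappa_fun m (kap l).
Hypothesis kap_est : forall (w : nat -> nat -> R) (y : Y),
  hinner (vsum (fun j => vsum (fun l => vsum (fun k =>
            hscal (w l j * w k j) (Q l (K (P j (Kstar (Q k y)))))) n) n) m) y
  <= hinner (vsum (fun l => hscal (kap l (fun j => (w l j)^2)) (Q l y)) n) y.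
Hypothesis phi_gt0 : forall j, (j < m)%nat -> 0 < phi j.
Hypothesis kap_le : forall l, (l < n)%nat ->
  kap l (fun j => (lam l j)^2 / phi j) <= c * psi l.

(* Condition (i) applied with the weights lam l j / sqrt (phi j). *)
Lemma coupling_adj_weighted_norm_le y :
  rsum (fun j => hinner (coupling_adj_block j y) (coupling_adj_block j y) / phi j) m
  <= c * hinner (diag_op Y n Q psi y) y.
Proof.
pose w l j := lam l j / sqrt (phi j).
have -> : rsum (fun j => hinner (coupling_adj_block j y) (coupling_adj_block j y) / phi j) m
  = hinner (vsum (fun j => vsum (fun l => vsum (fun k =>
      hscal (w l j * w k j) (Q l (K (P j (Kstar (Q k y)))))) n) n) m) y.
{ rewrite hinner_vsuml; apply: rsum_ext => j hj.
  rewrite hinner_coupling_adj_block /Rdiv Rmult_comm -rsumZ hinner_vsuml.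
  apply: rsum_ext => l hl; rewrite -rsumZ hinner_vsuml; apply: rsum_ext => k hk.
  rewrite hinner_scal (hinner_proj_adjoint _ _ _ _ _ _ K_adj (P_proj j hj) (Q_proj l hl)).
  rewrite hinner_sym /w div_sqrt_mul; auto; rewrite /Rdiv; ring. }
apply: Rle_trans (kap_est w y) _.
rewrite /diag_op !hinner_vsuml -rsumZ; apply: rsum_le => l hl.
have -> : kap l (fun j => (w l j)^2) = kap l (fun j => (lam l j)^2 / phi j).
{ case: (kap_fun l hl) => kap_ext _; apply: kap_ext => j hj.
  - exact: pow2_ge_0.
  - by rewrite /w /= Rmult_1_r div_sqrt_mul; auto; rewrite /Rdiv; ring. }
rewrite !hinner_scal; have := kap_le l hl.
have := orth_proj_hinner_ge0 _ (Q l) y (Q_proj l hl); nra.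
Qed.

Lemma coupling_op_bound x y : 0 < c ->
  2 * hinner (coupling_op x) y <= c * hinner (diag_op X m P phi x) x + hinner (diag_op Y n Q psi y) y.
Proof.
move=> c_gt0; rewrite hinner_coupling_op hinner_diag_op // -rsumZ.
pose S := rsum (fun j => hinner (coupling_adj_block j y) (coupling_adj_block j y) / phi j) m.
apply: (Rle_trans _ (rsum (fun j => c * (phi j * hinner (P j x) (P j x))) m + / c * S)).
- rewrite /S -rsumZ -rsumD; apply: rsum_le => j hj.
  have phij_gt0 := phi_gt0 j hj.
  have -> : / c * (hinner (coupling_adj_block j y) (coupling_adj_block j y) / phi j)
    = hinner (coupling_adj_block j y) (coupling_adj_block j y) / (c * phi j)
    by field; lra.
  rewrite -Rmult_assoc; apply: hinner_young; nra.
- have := coupling_adj_weighted_norm_le y; rewrite -/S => S_le.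
  have : / c * S <= hinner (diag_op Y n Q psi y) y.
  { apply: (Rmult_le_reg_l c) => //; rewrite -Rmult_assoc Rinv_r; lra. }
  rewrite rsumZ; lra.
Qed.

End Estimate.

End Coupling.

Section BlockOperator.

Variables (X Y : RHilbert) (Phi : X -> X) (Psi : Y -> Y) (Lam : X -> Y) (Lstar : Y -> X).
Hypothesis Phi_sa : is_adjoint Phi Phi.
Hypothesis Psi_sa : is_adjoint Psi Psi.
Hypothesis Lam_adj : is_adjoint Lam Lstar.

Definition block_op (u : X * Y) : X * Y :=
  (hsub (Phi (fst u)) (Lstar (snd u)), hsub (Psi (snd u)) (Lam (fst u))).

Lemma block_op_self_adjoint u v : pinner (block_op u) v = pinner u (block_op v).
Proof.
case: u v => [x1 y1] [x2 y2]; rewrite /pinner /=.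
rewrite !hinner_subl !hinner_subr Phi_sa Psi_sa (hinner_sym _ (Lstar y1)) -!Lam_adj.
rewrite (hinner_sym _ (Lam x1)) (hinner_sym _ (Lam x2)); ring.
Qed.

Lemma pinner_block_op x y :
  pinner (block_op (x, y)) (x, y) =
  hinner (Phi x) x - 2 * hinner (Lam x) y + hinner (Psi y) y.
Proof.
rewrite /pinner /= !hinner_subl (hinner_sym _ (Lstar y)) -Lam_adj; ring.
Qed.

End BlockOperator.

Theorem mainTheorem1
  (X Y : RHilbert) (K : X -> Y) (Kstar : Y -> X)
  (hK : bounded_linear K) (hKs : is_adjoint K Kstar)
  (m n : nat) (P : nat -> X -> X) (Q : nat -> Y -> Y)
  (hP : proj_family m P) (hQ : proj_family n Q)
  (kap : nat -> (nat -> R) -> R) (hkap : in_Kset K Kstar m n P Q kap)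
  (delta : R) (hdelta : 0 < delta < 1)
  (phi psi : nat -> R)
  (hphi : forall j, (j < m)%nat -> 0 < phi j)
  (hpsi : forall l, (l < n)%nat -> 0 < psi l)
  (lam : nat -> nat -> R)
  (hlam : forall j l, (j < m)%nat -> (l < n)%nat -> ~ Cset K P Q j l -> lam l j = 0)
  (hcond : forall l, (l < n)%nat ->
     (1 - delta) * psi l >= kap l (fun j => (lam l j)^2 / phi j)) :
  let Phi := fun x : X => vsum (fun j => hscal (phi j) (P j x)) m in
  let Psi := fun y : Y => vsum (fun l => hscal (psi l) (Q l y)) n in
  let Lambda := fun x : X =>
    vsum (fun j => vsum (fun l => hscal (lam l j) (Q l (K (P j x)))) n) m in
  forall Lstar : Y -> X, is_adjoint Lambda Lstar ->
  let M := fun u : X * Y =>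
    (hsub (Phi (fst u)) (Lstar (snd u)), hsub (Psi (snd u)) (Lambda (fst u))) in
  let D := fun u : X * Y => (hscal delta (Phi (fst u)), (hzero : Y)) in
  (forall u v, pinner (M u) v = pinner u (M v)) /\
  (forall u, 0 <= pinner (M u) u) /\
  (forall u, 0 <= pinner (hsub (fst (M u)) (fst (D u)), hsub (snd (M u)) (snd (D u))) u).
Proof.
move=> Phi Psi Lambda Lstar Lambda_adj M D.
case: hP => P_proj _; case: hQ => Q_proj _; case: hkap => kap_fun [kap_est _].
have Phi_sa : is_adjoint Phi Phi by apply: diag_op_self_adjoint.
have Psi_sa : is_adjoint Psi Psi by apply: diag_op_self_adjoint.
have bound x y :
    2 * hinner (Lambda x) y <= (1 - delta) * hinner (Phi x) x + hinner (Psi y) y.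
{ apply: (coupling_op_bound X Y K Kstar m n P Q lam hKs P_proj Q_proj kap) => //.
  - by move=> l hl; apply: Rge_le; apply: hcond.
  - lra. }
have shifted u :
    0 <= pinner (hsub (fst (M u)) (fst (D u)), hsub (snd (M u)) (snd (D u))) u.
{ case: u => x y; have := pinner_block_op X Y Phi Psi Lambda Lstar Lambda_adj x y.
  rewrite /pinner /= !hinner_subl hinner0l hinner_scal; have := bound x y; lra. }
split; [exact: block_op_self_adjoint | split => // u].
have := shifted u; case: u => x y.
have Phi_ge0 : 0 <= hinner (Phi x) x.
{ apply: hinner_diag_op_ge0 => // j hj; exact: Rlt_le (hphi j hj). }
rewrite /pinner /= !hinner_subl hinner0l hinner_scal; nra.
Qed.
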